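(* Consider a Pandora's box problem with sequential inspection. Let $(\mathcal{C},\mathcal{P},y)$ be any state in which stopping is not an optimal action, and suppose that a closed box $i\in\mathcal{C}$ satisfies $\sigma_i^F>\sigma_i^P$ and that $\sigma_i^F$ is the largest opening threshold in that state, i.e. $$\sigma_i^F=\max\Big\{\max_{j\in\mathcal{C}}\max\{\sigma_j^F,\sigma_j^P\},\ \max_{j\in\mathcal{P}}\sigma_j^{F\mid t_j}\Big\}.$$ Then there exists an optimal policy that F-opens box $i$ immediately.
   Context: Pandora's box problem with sequential inspection: there are $N$ independent boxes. Box $i$ has a type $T_i$ taking values in a finite set $\Gamma_i$ and a nonnegative prize $V_i$, with a known joint distribution of $(V_i,T_i)$; different boxes are independent. A closed box $i$ can be F-opened (fully opened) at cost $c_i^F$, which reveals $V_i$, or P-opened (partially opened) at cost $c_i^P$, which reveals only $T_i$; a partially opened box can later be F-opened at an additional cost $c_i^F$. At any time the decision maker may stop and collect the largest prize among the F-opened boxes (or the initial value $y$). The objective is to maximize the expected collected prize minus the total inspection costs. A state is $(\mathcal{C},\mathcal{P},y)$ where $\mathcal{C}$ is the set of closed boxes, $\mathcal{P}$ is the set of partially opened boxes together with their revealed types $t_j$, and $y$ is the largest prize found so far. Thresholds: $\sigma_i^F$ solves $\mathbb{E}[(V_i-\sigma)^+]=c_i^F$; $\sigma_i^{F\mid t}$ solves $\mathbb{E}[(V_i-\sigma)^+\mid T_i=t]=c_i^F$; $\sigma_i^P$ solves $\mathbb{E}\big[\max\{0,-c_i^F+\mathbb{E}[(V_i-\sigma)^+\mid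 T_i]\}\big]=c_i^P$. The opening thresholds of a state are $\sigma_j^F,\sigma_j^P$ for $j\in\mathcal{C}$ and $\sigma_j^{F\mid t_j}$ for $j\in\mathcal{P}$. *)

From HB Require Import structures.
From mathcomp Require Import all_boot all_order all_algebra.
From mathcomp Require Import all_classical all_reals all_analysis.
Unset Printing Implicit Defensive.
Import Order.TTheory GRing.Theory Num.Theory.
Local Open Scope ring_scope.
Local Open Scope classical_set_scope.

(* Status of a box in a state: closed (in C), partially opened with revealed
   type t (in P, with t_j = t), or already fully opened (then its prize has
   already been absorbed into y). *)
Inductive bstatus (G : Type) := Closed | Part of G | Done.
Arguments Closed {G}.
Arguments Part {G} _.
Arguments Done {G}.

Section Pandora.
Variables (R : realType) (N : nat) (Gam : 'I_N -> finType).

Definition state := forall j : 'I_N, bstatus (Gam j).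

Definition upd (s : state) (j : 'I_N) (x : bstatus (Gam j)) : state :=
  fun k => match j =P k with
           | ReflectT e => eq_rect j (fun k => bstatus (Gam k)) x k e
           | ReflectF _ => s k
           end.

(* weight: 2 per closed box, 1 per partially opened box; every inspection
   strictly decreases it. *)
Definition weight (s : state) : nat :=
  \sum_(j < N) match s j with Closed => 2 | Part _ => 1 | Done => 0 end.

(* Model data:
   pT j t   = P(T_j = t),
   mu j t   = conditional law of V_j given T_j = t (a probability on R),
   cF j, cP j = F- and P-opening costs. *)
Variables (pT : forall j, Gam j -> R)
          (mu : forall j, Gam j -> probability R R)
          (cF cP : 'I_N -> R).

Definition condE (j : 'I_N) (t : Gam j) (g : R -> R) : R :=
  Rintegral (mu j t) setT g.

Fixpoint Vfuel (n : nat) (s : state) (y : R) {struct n} : R :=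
  match n with
  | 0 => y
  | n'.+1 =>
    \big[Num.max/y]_(j < N)
      match s j with
      | Closed =>
          Num.max
            (- cF j + \sum_(t : Gam j) pT j t *
                        condE j t (fun v => Vfuel n' (upd s j Done) (Num.max y v)))
            (- cP j + \sum_(t : Gam j) pT j t * Vfuel n' (upd s j (Part t)) y)
      | Part t =>
          - cF j + condE j t (fun v => Vfuel n' (upd s j Done) (Num.max y v))
      | Done => y
      end
  end.

Definition Value (s : state) (y : R) : R := Vfuel (weight s) s y.

Definition QFopen (s : state) (y : R) (i : 'I_N) : R :=
  - cF i + \sum_(t : Gam i) pT i t *
             condE i t (fun v => Value (upd s i Done) (Num.max y v)).

Definition is_sigmaF (j : 'I_N) (sg : R) : Prop :=
  \sum_(t : Gam j) pT j t * condE j t (fun v => Num.max (v - sg) 0) = cF j.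

Definition is_sigmaFt (j : 'I_N) (t : Gam j) (sg : R) : Prop :=
  condE j t (fun v => Num.max (v - sg) 0) = cF j.

Definition is_sigmaP (j : 'I_N) (sg : R) : Prop :=
  \sum_(t : Gam j) pT j t *
     Num.max 0 (- cF j + condE j t (fun v => Num.max (v - sg) 0)) = cP j.

End Pandora.

Arguments upd {N Gam} s j x.
Arguments weight {N Gam} s.
Arguments condE {R N Gam} mu j t g.
Arguments Vfuel {R N Gam} pT mu cF cP n s y.
Arguments Value {R N Gam} pT mu cF cP s y.
Arguments QFopen {R N Gam} pT mu cF cP s y i.
Arguments is_sigmaF {R N Gam} pT mu cF j sg.
Arguments is_sigmaFt {R N Gam} mu cF j t sg.
Arguments is_sigmaP {R N Gam} pT mu cF cP j sg.

(* Weitzman-style amortization.  Give every unopened box a cap: max(σ^F, σ^P)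
   for a closed box, σ^{F|t} for a box partially opened with type t.  By
   induction on the remaining inspections, the value of a state is at most the
   value of receiving box i's prize, truncated at its cap, for free and then
   continuing optimally without box i.  Each inspection of box i itself is
   compared with this bound through the threshold equations; an inspection of
   another box j commutes with the free prize of box i (Fubini), which is where
   we use that value functions are nondecreasing and 1-Lipschitz in y.  Hence
   stopping is optimal once y exceeds every cap.  In the theorem the cap of box
   i is σ_i^F, and y < σ_i^F since stopping is not optimal; beyond σ_i^F the
   continuation value after F-opening box i is the prize itself, so the value
   of F-opening box i is the bound plus E[(V_i - σ_i^F)^+] - c_i^F = 0. *)

From HB Require Import structures.
From mathcomp Require Import all_boot all_order all_algebra.
From mathcomp Require Import all_classical all_reals all_analysis.
From mathcomp Require Import measurable_realfun.
From mathcomp Require Import lra zify.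
Import Order.TTheory GRing.Theory Num.Theory.
Local Open Scope ring_scope.
Local Open Scope classical_set_scope.

Ltac case_minmax := repeat match goal with
 | |- context [@Order.max _ _ ?x ?y] =>
     let h := fresh "hm" in have [h|h] := leP x y; move: h
 | |- context [@Order.min _ _ ?x ?y] =>
     let h := fresh "hm" in have [h|h] := leP x y; move: h
 end; intros.

Section NondecreasingLipschitz.
Context {R : realType}.
Implicit Types (f g : R -> R) (a b c k y : R).

Definition nondecr_lip1 f := forall a b, b <= a -> f b <= f a <= f b + (a - b).

Lemma nondecr_lip1_homo f : nondecr_lip1 f -> {homo f : a b / a <= b}.
Proof. by move=> hf a b ab; case/andP: (hf _ _ ab). Qed.

Lemma nondecr_lip1_id : nondecr_lip1 id.
Proof. by move=> a b ab; apply/andP; split; lra. Qed.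

Lemma nondecr_lip1_cst k : nondecr_lip1 (fun=> k).
Proof. by move=> a b ab; apply/andP; split; lra. Qed.

Lemma nondecr_lip1_comp {f g} :
  nondecr_lip1 f -> nondecr_lip1 g -> nondecr_lip1 (fun v => f (g v)).
Proof.
move=> hf hg a b ab; case/andP: (hg _ _ ab) => g1 g2.
by case/andP: (hf _ _ g1) => f1 f2; apply/andP; split => //=; lra.
Qed.

Lemma nondecr_lip1_maxl y : nondecr_lip1 (Num.max y).
Proof. by move=> a b ab; apply/andP; split; case_minmax; lra. Qed.

Lemma nondecr_lip1_maxr y : nondecr_lip1 (Num.max ^~ y).
Proof. by move=> a b ab; apply/andP; split; case_minmax; lra. Qed.

Lemma nondecr_lip1_minr c : nondecr_lip1 (Num.min ^~ c).
Proof. by move=> a b ab; apply/andP; split; case_minmax; lra. Qed.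

Lemma nondecr_lip1_capped f y c :
  nondecr_lip1 f -> nondecr_lip1 (fun u => f (Num.max y (Num.min u c))).
Proof.
move=> hf.
exact: nondecr_lip1_comp hf (nondecr_lip1_comp (nondecr_lip1_maxl y) (nondecr_lip1_minr c)).
Qed.

Lemma nondecr_lip1_excess c : nondecr_lip1 (fun v => Num.max (v - c) 0).
Proof. by move=> a b ab; apply/andP; split; case_minmax; lra. Qed.

Lemma nondecr_lip1_addl f k : nondecr_lip1 f -> nondecr_lip1 (fun v => k + f v).
Proof. by move=> hf a b ab; case/andP: (hf _ _ ab) => f1 f2; apply/andP; split; lra. Qed.

Lemma nondecr_lip1_max f g :
  nondecr_lip1 f -> nondecr_lip1 g -> nondecr_lip1 (fun v => Num.max (f v) (g v)).
Proof.
move=> hf hg a b ab; case/andP: (hf _ _ ab) => f1 f2; case/andP: (hg _ _ ab) => g1 g2.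
by apply/andP; split; case_minmax; lra.
Qed.

Lemma nondecr_lip1_convex (I : finType) (w : I -> R) (F : I -> R -> R) :
  (forall t, 0 <= w t) -> \sum_t w t = 1 -> (forall t, nondecr_lip1 (F t)) ->
  nondecr_lip1 (fun z => \sum_t w t * F t z).
Proof.
move=> w0 w1 hF a b ab; apply/andP; split.
  by apply: ler_sum => t _; apply: ler_wpM2l => //; case/andP: (hF t _ _ ab).
have <- : \sum_t w t * (F t b + (a - b)) = \sum_t w t * F t b + (a - b).
  by under eq_bigr do rewrite mulrDr; rewrite big_split /= -mulr_suml w1 mul1r.
by apply: ler_sum => t _; apply: ler_wpM2l => //; case/andP: (hF t _ _ ab).
Qed.

Lemma nondecr_lip1_bigmax (I : finType) (F : I -> R -> R) :
  (forall j, nondecr_lip1 (F j)) -> nondecr_lip1 (fun z => \big[Num.max/z]_j F j z).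
Proof.
move=> hF a b ab.
pose K x x' := x <= x' <= x + (a - b).
apply: (big_ind2 K); rewrite /K.
- by apply/andP; split; lra.
- by move=> x1 x2 y1 y2 /andP[h1 h2] /andP[h3 h4]; apply/andP; split; case_minmax; lra.
- by move=> j _; exact: hF.
Qed.

Lemma nondecr_lip1_normr f v : nondecr_lip1 f -> `|f v| <= `|f 0| + `|v|.
Proof.
move=> hf; have := ler_norm (f 0); have := ler_norm (- f 0); rewrite normrN => h1 h2.
rewrite ler_norml; have [v0|v0] := leP 0 v.
  by case/andP: (hf v 0 v0); rewrite (ger0_norm v0); lra.
by case/andP: (hf 0 v (ltW v0)); rewrite (ltr0_norm v0); lra.
Qed.

Lemma nondecr_lip1_le_excess f a b : nondecr_lip1 f -> f a <= f b + Num.max (a - b) 0.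
Proof.
move=> hf; have [ab|ba] := leP a b.
  by case/andP: (hf _ _ ab); case_minmax; lra.
by case/andP: (hf _ _ (ltW ba)); case_minmax; lra.
Qed.

Lemma max_homo f a b : {homo f : x y / x <= y} -> f (Num.max a b) = Num.max (f a) (f b).
Proof.
move=> hf; have [ab|ba] := leP a b; first by rewrite !max_r ?hf.
by rewrite !max_l ?hf ?ltW.
Qed.

End NondecreasingLipschitz.

Section Expectation.
Context {R : realType} {P : probability R R}.
Hypothesis P_mean : P.-integrable setT EFin.
Implicit Types (f g : R -> R) (c k : R).

Lemma Rintegral_prob_cst k : \int[P]_x k = k.
Proof.
rewrite Rintegral_cst //; transitivity (k * fine (1%E : \bar R)); last by rewrite mulr1.
by congr (_ * fine _); exact: probability_setT.
Qed.

Lemma integrable_nondecr_lip1 f : nondecr_lip1 f -> P.-integrable setT (EFin \o f).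
Proof.
move=> hf; apply: (@le_integrable _ _ _ P setT measurableT _ (fun v => (`|f 0| + `|v|)%:E)).
- have hm := nondecr_lip1_homo _ hf.
  by apply/measurable_EFinP; exact: nondecreasing_measurable.
- by move=> v _ /=; rewrite /abse lee_fin (le_trans (nondecr_lip1_normr _ v hf)) ?ler_norm.
- have -> : (fun v => (`|f 0| + `|v|)%:E) = (fun=> `|f 0|%:E) \+ (fun v => `|v%:E|)%E.
    by apply/funext => v; rewrite /= EFinD.
  apply: integrableD => //; first exact: finite_measure_integrable_cst.
  exact: integrable_abse.
Qed.

Lemma integrable_realD f g : P.-integrable setT (EFin \o f) ->
  P.-integrable setT (EFin \o g) -> P.-integrable setT (EFin \o (f \+ g)).
Proof.
move=> hf hg; have -> : EFin \o (f \+ g) = (EFin \o f) \+ (EFin \o g).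
  by apply/funext => v; rewrite /= EFinD.
exact: integrableD.
Qed.

Lemma integrable_realZ k f : P.-integrable setT (EFin \o f) ->
  P.-integrable setT (EFin \o (fun v => k * f v)).
Proof.
move=> hf; have -> : EFin \o (fun v => k * f v) = (fun v => k%:E * (EFin \o f) v)%E.
  by apply/funext => v; rewrite /= EFinM.
exact: integrableZl.
Qed.

Lemma integrable_real_sum (I : Type) (r : seq I) (w : I -> R) (F : I -> R -> R) :
  (forall t, P.-integrable setT (EFin \o F t)) ->
  P.-integrable setT (EFin \o (fun v => \sum_(t <- r) w t * F t v)).
Proof.
move=> hF; elim: r => [|t r ih].
  by under eq_fun do rewrite big_nil; exact: finite_measure_integrable_cst.
by under eq_fun do rewrite big_cons; apply: integrable_realD => //; exact: integrable_realZ.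
Qed.

Lemma Rintegral_sum (I : Type) (r : seq I) (w : I -> R) (F : I -> R -> R) :
  (forall t, P.-integrable setT (EFin \o F t)) ->
  \int[P]_v (\sum_(t <- r) w t * F t v) = \sum_(t <- r) w t * \int[P]_v F t v.
Proof.
move=> hF; elim: r => [|t r ih].
  by under eq_Rintegral do rewrite big_nil; rewrite Rintegral_prob_cst big_nil.
under eq_Rintegral do rewrite big_cons.
rewrite RintegralD ?RintegralZl ?ih ?big_cons //.
  exact: integrable_realZ.
exact: integrable_real_sum.
Qed.

Lemma Rintegral_addl k f : P.-integrable setT (EFin \o f) ->
  \int[P]_v (k + f v) = k + \int[P]_v f v.
Proof.
move=> hf; rewrite RintegralD ?Rintegral_prob_cst //.
exact: finite_measure_integrable_cst.
Qed.

Lemma Rintegral_nondecr_lip1 (F : R -> R -> R) :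
  (forall u, nondecr_lip1 (F ^~ u)) -> (forall v, P.-integrable setT (EFin \o F v)) ->
  nondecr_lip1 (fun v => \int[P]_u F v u).
Proof.
move=> hF iF a b ab; apply/andP; split.
  by apply: le_Rintegral => // u _; case/andP: (hF u _ _ ab).
rewrite addrC -Rintegral_addl //; apply: le_Rintegral => //.
- apply: integrable_realD (iF b); exact: finite_measure_integrable_cst.
- by move=> u _; case/andP: (hF u _ _ ab); lra.
Qed.

Lemma nondecr_lip1_Rintegral_max f g : nondecr_lip1 f -> nondecr_lip1 g ->
  nondecr_lip1 (fun z => \int[P]_u f (Num.max z (g u))).
Proof.
move=> hf hg; apply: Rintegral_nondecr_lip1 => [u|z].
  exact: nondecr_lip1_comp hf (nondecr_lip1_maxr (g u)).
apply: (integrable_nondecr_lip1 (fun u => f (Num.max z (g u)))).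
exact: nondecr_lip1_comp hf (nondecr_lip1_comp (nondecr_lip1_maxl z) hg).
Qed.

Lemma Rintegral_le_excess f g h e :
  nondecr_lip1 f -> nondecr_lip1 g -> nondecr_lip1 h -> nondecr_lip1 e ->
  (forall u, Num.max (g u - h u) 0 <= e u) ->
  \int[P]_u f (g u) <= \int[P]_u f (h u) + \int[P]_u e u.
Proof.
move=> hf hg hh he ghe.
have int_fh := integrable_nondecr_lip1 _ (nondecr_lip1_comp hf hh).
have int_e := integrable_nondecr_lip1 _ he.
rewrite -RintegralD //; apply: le_Rintegral => //.
- exact: integrable_nondecr_lip1 _ (nondecr_lip1_comp hf hg).
- exact: integrable_realD.
- by move=> u _; apply: le_trans (nondecr_lip1_le_excess _ _ (h u) hf) _; rewrite lerD2l.
Qed.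

Lemma Rintegral_excess_cap_le c st sp :
  \int[P]_u Num.max (u - st) 0 = c ->
  \int[P]_u Num.max (Num.min u st - sp) 0 <=
  Num.max 0 (- c + \int[P]_u Num.max (u - sp) 0).
Proof.
have int_excess d : P.-integrable setT (EFin \o (fun u => Num.max (u - d) 0)).
  exact/integrable_nondecr_lip1/nondecr_lip1_excess.
move=> hc; have [le_sp_st|lt_st_sp] := leP sp st.
  have split_excess : \int[P]_u Num.max (u - sp) 0 =
                      \int[P]_u Num.max (Num.min u st - sp) 0 + c.
    rewrite -hc -RintegralD //; first by apply: eq_Rintegral => u _; case_minmax; lra.
    apply: (integrable_nondecr_lip1 (fun u => Num.max (Num.min u st - sp) 0)).
    exact: nondecr_lip1_comp (nondecr_lip1_excess sp) (nondecr_lip1_minr st).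
  by rewrite split_excess le_max; apply/orP; right; lra.
have -> : \int[P]_u Num.max (Num.min u st - sp) 0 = \int[P]_u (0 : R).
  by apply: eq_Rintegral => u _; case_minmax; lra.
by rewrite Rintegral_prob_cst le_max lexx.
Qed.

End Expectation.

Section Fubini.
Context {R : realType} {P Q : probability R R}.
Hypotheses (P_mean : P.-integrable setT EFin) (Q_mean : Q.-integrable setT EFin).

Lemma Rintegral_swap_max_ge0 (A B : R -> R) :
  nondecr_lip1 A -> nondecr_lip1 B -> (forall v, 0 <= A v) -> (forall u, 0 <= B u) ->
  \int[P]_v \int[Q]_u Num.max (A v) (B u) = \int[Q]_u \int[P]_v Num.max (A v) (B u).
Proof.
move=> hA hB A0 B0; rewrite /Rintegral.
have finQ v : (\int[Q]_u (Num.max (A v) (B u))%:E \is a fin_num)%E.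
  apply/integrable_fin_num/integrable_nondecr_lip1 => //.
  exact/nondecr_lip1_max/hB/nondecr_lip1_cst.
have finP u : (\int[P]_v (Num.max (A v) (B u))%:E \is a fin_num)%E.
  apply/integrable_fin_num/integrable_nondecr_lip1 => //.
  exact/nondecr_lip1_max/nondecr_lip1_cst.
under eq_integral do rewrite fineK //.
under [in RHS]eq_integral do rewrite fineK //.
congr fine; pose F (p : R * R) := (Num.max (A p.1) (B p.2))%:E.
have mF : measurable_fun setT F.
  have [mA mB] := (nondecr_lip1_homo _ hA, nondecr_lip1_homo _ hB).
  apply/measurable_EFinP/measurable_maxr.
  - by apply: measurableT_comp => //; exact: nondecreasing_measurable.
  - by apply: measurableT_comp => //; exact: nondecreasing_measurable.
have F0 p : (0 <= F p)%E by rewrite lee_fin le_max A0.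
exact: (@fubini_tonelli _ _ _ _ _ P Q F mF F0).
Qed.

Lemma Rintegral_swap_nondecr_lip1 (A B f : R -> R) y :
  nondecr_lip1 A -> nondecr_lip1 B -> nondecr_lip1 f ->
  (forall v, y <= A v) -> (forall u, y <= B u) ->
  \int[P]_v \int[Q]_u f (Num.max (A v) (B u)) =
  \int[Q]_u \int[P]_v f (Num.max (A v) (B u)).
Proof.
move=> hA hB hf yA yB; have f_homo := nondecr_lip1_homo _ hf.
(* Tonelli needs nonnegative integrands; shifting by f y provides them. *)
pose A' v := - f y + f (A v); pose B' u := - f y + f (B u).
have hA' : nondecr_lip1 A' by exact/nondecr_lip1_addl/nondecr_lip1_comp.
have hB' : nondecr_lip1 B' by exact/nondecr_lip1_addl/nondecr_lip1_comp.
have shift v u : f (Num.max (A v) (B u)) = f y + Num.max (A' v) (B' u).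
  rewrite max_homo // /A' /B'.
  by have := f_homo _ _ (yA v); have := f_homo _ _ (yB u); case_minmax; lra.
have lipQ v : nondecr_lip1 (fun u => Num.max (A' v) (B' u)).
  exact/nondecr_lip1_max/hB'/nondecr_lip1_cst.
have lipP u : nondecr_lip1 (fun v => Num.max (A' v) (B' u)).
  exact/nondecr_lip1_max/nondecr_lip1_cst.
transitivity (f y + \int[P]_v \int[Q]_u Num.max (A' v) (B' u)).
  rewrite -Rintegral_addl; last first.
    apply/integrable_nondecr_lip1/Rintegral_nondecr_lip1 => // v.
    exact: integrable_nondecr_lip1.
  apply: eq_Rintegral => v _; rewrite -Rintegral_addl; last exact: integrable_nondecr_lip1.
  by apply: eq_Rintegral => u _; rewrite shift.
transitivity (f y + \int[Q]_u \int[P]_v Num.max (A' v) (B' u)).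
  by rewrite Rintegral_swap_max_ge0 // => [v|u]; rewrite /A' /B' addrC subr_ge0 f_homo.
rewrite -Rintegral_addl; last first.
  apply/integrable_nondecr_lip1/Rintegral_nondecr_lip1 => // u.
  exact: integrable_nondecr_lip1.
apply: eq_Rintegral => u _; rewrite -Rintegral_addl; last exact: integrable_nondecr_lip1.
by apply: eq_Rintegral => v _; rewrite shift.
Qed.

End Fubini.

Section States.
Context {N : nat} {Gam : 'I_N -> finType}.
Implicit Types (s : state N Gam) (j k : 'I_N).

Lemma upd_eq s j x : upd s j x j = x.
Proof. by rewrite /upd; case: (j =P j) => // e; rewrite (eq_irrelevance e erefl). Qed.

Lemma upd_neq s j k x : j != k -> upd s j x k = s k.
Proof. by rewrite /upd; case: (j =P k) => // ->; rewrite eqxx. Qed.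

Lemma upd_upd s j x x' : upd (upd s j x) j x' = upd s j x'.
Proof.
apply: functional_extensionality_dep => k.
by have [<-|jk] := eqVneq j k; rewrite ?upd_eq ?upd_neq.
Qed.

Lemma upd_comm s j k x x' : j != k ->
  upd (upd s j x) k x' = upd (upd s k x') j x.
Proof.
move=> jk; apply: functional_extensionality_dep => l.
have [<-|jl] := eqVneq j l; first by rewrite upd_neq 1?eq_sym // !upd_eq.
have [<-|kl] := eqVneq k l; first by rewrite upd_eq upd_neq // upd_eq.
by rewrite !upd_neq.
Qed.

Definition status_weight {G : Type} (b : bstatus G) : nat :=
  match b with Closed => 2 | Part _ => 1 | Done => 0 end.

Lemma weightE s : weight s = (\sum_j status_weight (s j))%N.
Proof. by []. Qed.

Lemma weight_upd s j x :
  (weight (upd s j x) + status_weight (s j) = weight s + status_weight x)%N.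
Proof.
rewrite !weightE (bigD1 j) //= [in RHS](bigD1 j) //= upd_eq.
rewrite (eq_bigr (fun k => status_weight (s k))) => [|k kj]; first lia.
by rewrite upd_neq // eq_sym.
Qed.

Lemma weight_upd_Done s j : s j <> Done -> (weight (upd s j Done) < weight s)%N.
Proof. by have := weight_upd s j Done; case: (s j) => //= [|t] *; lia. Qed.

Lemma weight_upd_Part s j t : s j = Closed -> (weight (upd s j (Part t)) < weight s)%N.
Proof. by have := weight_upd s j (Part t) => + sj; rewrite sj /=; lia. Qed.

Lemma weight_eq0 s j : weight s = 0%N -> s j = Done.
Proof.
have : (status_weight (s j) <= weight s)%N by rewrite weightE (bigD1 j) //= leq_addr.
by move=> + w0; rewrite w0; case: (s j).
Qed.

End States.

Section Pandora.
Context {R : realType} {N : nat} {Gam : 'I_N -> finType}.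
Context {pT : forall j, Gam j -> R} {mu : forall j, Gam j -> probability R R}.
Context {cF cP : 'I_N -> R}.
Hypothesis pT_ge0 : forall j t, 0 <= pT j t.
Hypothesis pT_sum1 : forall j, \sum_(t : Gam j) pT j t = 1.
Hypothesis mu_mean : forall j t, (mu j t).-integrable setT (fun v => v%:E).
Implicit Types (s : state N Gam) (i j : 'I_N) (y z : R) (f : R -> R).

Local Notation V := (Vfuel pT mu cF cP).
Local Notation Val := (Value pT mu cF cP).

Definition inspection (W : state N Gam -> R -> R) s y j : R :=
  match s j with
  | Closed =>
      Num.max
        (- cF j + \sum_(t : Gam j) pT j t *
                    condE mu j t (fun v => W (upd s j Done) (Num.max y v)))
        (- cP j + \sum_(t : Gam j) pT j t * W (upd s j (Part t)) y)
  | Part t => - cF j + condE mu j t (fun v => W (upd s j Done) (Num.max y v))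
  | Done => y
  end.

Lemma VfuelS n s y : V n.+1 s y = \big[Num.max/y]_j inspection (V n) s y j.
Proof. by []. Qed.

Lemma eq_inspection W W' s y j :
  (forall s' z, (weight s' < weight s)%N -> W s' z = W' s' z) ->
  inspection W s y j = inspection W' s y j.
Proof.
rewrite /inspection => eqW; move: (weight_upd_Done s j) (weight_upd_Part s j).
case: (s j) => [|t|] // ltD ltP; last first.
  by congr (_ + _); apply: eq_Rintegral => v _; rewrite eqW ?ltD.
congr (Num.max (_ + _) (_ + _)); apply: eq_bigr => t _.
  by congr (_ * _); apply: eq_Rintegral => v _; rewrite eqW ?ltD.
by rewrite eqW ?ltP.
Qed.

Lemma inspection_Done W s y :
  (forall j, s j = Done) -> \big[Num.max/y]_j inspection W s y j = y.
Proof.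
by move=> sD; apply: big1_idem => [|j _]; [exact: maxxx | rewrite /inspection sD].
Qed.

Lemma Vfuel_stable n m s y :
  (weight s <= n)%N -> (weight s <= m)%N -> V n s y = V m s y.
Proof.
elim: n m s y => [|n IH] [|m] s y hn hm //.
- by rewrite VfuelS inspection_Done // => j; apply: weight_eq0; lia.
- by rewrite VfuelS inspection_Done // => j; apply: weight_eq0; lia.
rewrite !VfuelS; apply: eq_bigr => j _; apply: eq_inspection => s' z lt_s'.
by apply: IH; lia.
Qed.

Lemma Vfuel_Value n s y : (weight s <= n)%N -> V n s y = Val s y.
Proof. by move=> hn; apply: Vfuel_stable. Qed.

Local Notation inspection_value := (inspection Val).

Lemma ValueE s y : Val s y = \big[Num.max/y]_j inspection_value s y j.
Proof.
rewrite {1}/Value; case ws: (weight s) => [|n].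
  by rewrite inspection_Done // => j; exact: weight_eq0.
rewrite VfuelS; apply: eq_bigr => j _; apply: eq_inspection => s' z lt_s'.
by apply: Vfuel_Value; lia.
Qed.

Lemma Value_ge s y : y <= Val s y.
Proof. by rewrite ValueE; elim/big_rec: _ => // j x _ yx; rewrite le_max yx orbT. Qed.

Lemma inspection_le_Value s y j : inspection_value s y j <= Val s y.
Proof. by rewrite ValueE; exact: le_bigmax. Qed.

Lemma Value_nondecr_lip1 s : nondecr_lip1 (Val s).
Proof.
have [n] := ubnP (weight s); elim: n s => // n IH s ws.
have IH' s' : (weight s' < weight s)%N -> nondecr_lip1 (Val s').
  by move=> lt; apply: IH; lia.
have -> : Val s = fun y => \big[Num.max/y]_j inspection_value s y j.
  by apply/funext => y; rewrite ValueE.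
apply: nondecr_lip1_bigmax => j; rewrite /inspection.
move: (weight_upd_Done s j) (weight_upd_Part s j); case: (s j) => [|t|] // ltD ltP.
- apply: nondecr_lip1_max; apply: nondecr_lip1_addl; apply: nondecr_lip1_convex => // t.
    exact: nondecr_lip1_Rintegral_max (IH' _ (ltD _)) nondecr_lip1_id.
  exact: IH' (ltP _ _).
- exact/nondecr_lip1_addl/nondecr_lip1_Rintegral_max/nondecr_lip1_id/IH'/ltD.
- exact: nondecr_lip1_id.
Qed.

(* Box i's prize, truncated at c t where t is drawn from w, is received for
   free, and one continues with f. *)
Definition capped_value i (w c : Gam i -> R) f y : R :=
  \sum_t w t * condE mu i t (fun u => f (Num.max y (Num.min u (c t)))).

Section CappedValue.
Context {i : 'I_N} {w c : Gam i -> R}.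
Hypotheses (w_ge0 : forall t, 0 <= w t) (w_sum1 : \sum_t w t = 1).

Lemma capped_value_nondecr_lip1 f : nondecr_lip1 f -> nondecr_lip1 (capped_value i w c f).
Proof.
move=> hf; apply: nondecr_lip1_convex => // t.
exact: nondecr_lip1_Rintegral_max hf (nondecr_lip1_minr _).
Qed.

Lemma le_capped_value f g y : nondecr_lip1 f -> nondecr_lip1 g ->
  (forall z, f z <= g z) -> capped_value i w c f y <= capped_value i w c g y.
Proof.
move=> hf hg fg; apply: ler_sum => t _; apply: ler_wpM2l => //.
by apply: le_Rintegral => //; apply: integrable_nondecr_lip1 => //;
  exact: nondecr_lip1_capped.
Qed.

Lemma capped_value_ge f y : nondecr_lip1 f -> (forall z, z <= f z) ->
  y <= capped_value i w c f y.
Proof.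
move=> hf fz; rewrite -[leLHS]mul1r -w_sum1 mulr_suml; apply: ler_sum => t _.
apply: ler_wpM2l => //; rewrite -[leLHS](@Rintegral_prob_cst _ (mu i t) y).
apply: le_Rintegral => //.
- exact: finite_measure_integrable_cst.
- by apply: integrable_nondecr_lip1 => //; exact: nondecr_lip1_capped.
- by move=> u _; apply: le_trans (fz _); rewrite le_max lexx.
Qed.

Lemma capped_value_addl f k y : nondecr_lip1 f ->
  capped_value i w c (fun z => k + f z) y = k + capped_value i w c f y.
Proof.
move=> hf; rewrite /capped_value.
transitivity (\sum_t (w t * k +
  w t * condE mu i t (fun u => f (Num.max y (Num.min u (c t)))))).
  apply: eq_bigr => t _; rewrite -mulrDr /condE Rintegral_addl //.
  by apply: integrable_nondecr_lip1 => //; exact: nondecr_lip1_capped.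
by rewrite big_split /= -mulr_suml w_sum1 mul1r.
Qed.

Lemma capped_value_sum (J : finType) (a : J -> R) (g : J -> R -> R) y :
  (forall t', nondecr_lip1 (g t')) ->
  capped_value i w c (fun z => \sum_t' a t' * g t' z) y =
  \sum_t' a t' * capped_value i w c (g t') y.
Proof.
move=> hg; rewrite /capped_value.
transitivity (\sum_t \sum_t' a t' *
  (w t * condE mu i t (fun u => g t' (Num.max y (Num.min u (c t)))))).
  apply: eq_bigr => t _; rewrite /condE Rintegral_sum ?mulr_sumr.
    by apply: eq_bigr => t' _; rewrite mulrCA.
  by move=> t'; apply: integrable_nondecr_lip1 => //; exact: nondecr_lip1_capped.
by rewrite exchange_big; apply: eq_bigr => t' _; rewrite mulr_sumr.
Qed.

Lemma capped_value_affine (J : finType) (a : J -> R) (g : J -> R -> R) k y :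
  (forall t', 0 <= a t') -> \sum_t' a t' = 1 -> (forall t', nondecr_lip1 (g t')) ->
  capped_value i w c (fun z => k + \sum_t' a t' * g t' z) y =
  k + \sum_t' a t' * capped_value i w c (g t') y.
Proof.
move=> a0 a1 hg; rewrite capped_value_addl ?capped_value_sum //.
exact: nondecr_lip1_convex.
Qed.

Lemma capped_value_swap j t f y : nondecr_lip1 f ->
  condE mu j t (fun v => capped_value i w c f (Num.max y v)) =
  capped_value i w c (fun z => condE mu j t (fun v => f (Num.max z v))) y.
Proof.
move=> hf; rewrite {1}/condE /capped_value Rintegral_sum; last first.
  move=> t'; apply: integrable_nondecr_lip1 => //.
  apply: (nondecr_lip1_comp
    (f := fun z => condE mu i t' (fun u => f (Num.max z (Num.min u (c t'))))))
    (nondecr_lip1_maxl y).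
  exact: nondecr_lip1_Rintegral_max hf (nondecr_lip1_minr _).
apply: eq_bigr => t' _; congr (_ * _); rewrite /condE.
pose cap_y u := Num.max y (Num.min u (c t')).
transitivity (\int[mu j t]_v \int[mu i t']_u f (Num.max (Num.max y v) (cap_y u))).
  apply: eq_Rintegral => v _; apply: eq_Rintegral => u _.
  by congr f; rewrite /cap_y; case_minmax; lra.
rewrite (Rintegral_swap_nondecr_lip1 (mu_mean j t) (mu_mean i t') _ _ _ y) //.
- apply: eq_Rintegral => u _; apply: eq_Rintegral => v _.
  by congr f; rewrite /cap_y; case_minmax; lra.
- exact: nondecr_lip1_maxl.
- exact: nondecr_lip1_comp (nondecr_lip1_maxl y) (nondecr_lip1_minr _).
- by move=> v; rewrite le_max lexx.
- by move=> u; rewrite /cap_y le_max lexx.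
Qed.

Lemma capped_value_const f z : (forall t, c t <= z) -> capped_value i w c f z = f z.
Proof.
move=> cz; rewrite /capped_value -[RHS]mul1r -w_sum1 mulr_suml; apply: eq_bigr => t _.
congr (_ * _); rewrite /condE -[RHS](@Rintegral_prob_cst _ (mu i t)).
by apply: eq_Rintegral => u _; congr f; apply/max_idPl; rewrite ge_min cz orbT.
Qed.

End CappedValue.

Lemma capped_value_indicator i t c f y :
  capped_value i (fun t' => (t' == t)%:R) c f y =
  condE mu i t (fun u => f (Num.max y (Num.min u (c t)))).
Proof.
rewrite /capped_value (bigD1 t) //= eqxx mul1r big1 ?addr0 // => t' /negbTE ->.
by rewrite mul0r.
Qed.

Lemma condE_le_capped_excess i t f y c d : nondecr_lip1 f -> d <= c ->
  condE mu i t (fun v => f (Num.max y v)) <=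
  condE mu i t (fun u => f (Num.max y (Num.min u c))) +
  condE mu i t (fun v => Num.max (v - d) 0).
Proof.
move=> hf dc; apply: Rintegral_le_excess => //.
- exact: nondecr_lip1_maxl.
- exact: nondecr_lip1_comp (nondecr_lip1_maxl y) (nondecr_lip1_minr c).
- exact: nondecr_lip1_excess.
- by move=> v; case_minmax; lra.
Qed.

Section Thresholds.
Context {sF sP : 'I_N -> R} {sFt : forall j, Gam j -> R}.
Hypothesis hsF : forall j, is_sigmaF pT mu cF j (sF j).
Hypothesis hsP : forall j, is_sigmaP pT mu cF cP j (sP j).
Hypothesis hsFt : forall j t, is_sigmaFt mu cF j t (sFt j t).

Lemma Fopen_le_capped i f y M : nondecr_lip1 f -> sF i <= M ->
  - cF i + \sum_t pT i t * condE mu i t (fun v => f (Num.max y v)) <=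
  capped_value i (pT i) (fun=> M) f y.
Proof.
move=> hf hM; rewrite -(hsF i) -sumrN -big_split /=; apply: ler_sum => t _.
rewrite -mulrN -mulrDr; apply: ler_wpM2l => //.
by have := condE_le_capped_excess i t _ y _ _ hf hM; lra.
Qed.

Lemma Fopen_Part_le_capped i t f y : nondecr_lip1 f ->
  - cF i + condE mu i t (fun v => f (Num.max y v)) <=
  capped_value i (fun t' => (t' == t)%:R) (fun=> sFt i t) f y.
Proof.
move=> hf; rewrite capped_value_indicator.
by have := condE_le_capped_excess i t _ y _ _ hf (lexx (sFt i t)); rewrite (hsFt i t); lra.
Qed.

Lemma Popen_le_capped i f y M : nondecr_lip1 f -> sP i <= M ->
  - cP i + \sum_t pT i t * condE mu i t (fun u => f (Num.max y (Num.min u (sFt i t)))) <=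
  capped_value i (pT i) (fun=> M) f y.
Proof.
move=> hf hM; rewrite -(hsP i) -sumrN -big_split /=; apply: ler_sum => t _.
rewrite -mulrN -mulrDr; apply: ler_wpM2l => //.
have := Rintegral_excess_cap_le (mu_mean i t) _ _ (sP i) (hsFt i t).
have : condE mu i t (fun u => f (Num.max y (Num.min u (sFt i t)))) <=
       condE mu i t (fun u => f (Num.max y (Num.min u M))) +
       condE mu i t (fun u => Num.max (Num.min u (sFt i t) - sP i) 0).
  apply: Rintegral_le_excess => //.
  - exact: nondecr_lip1_comp (nondecr_lip1_maxl y) (nondecr_lip1_minr _).
  - exact: nondecr_lip1_comp (nondecr_lip1_maxl y) (nondecr_lip1_minr _).
  - exact: nondecr_lip1_comp (nondecr_lip1_excess _) (nondecr_lip1_minr _).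
  - by move=> u; case_minmax; lra.
rewrite /condE; case_minmax; lra.
Qed.

(* A box partially opened with type t0 is treated as a closed box whose type
   law is the point mass at t0 and whose cap is σ^{F|t0}. *)
Definition type_law i (b : bstatus (Gam i)) : Gam i -> R :=
  match b with Part t0 => fun t => (t == t0)%:R | _ => pT i end.

Definition cap i (b : bstatus (Gam i)) : Gam i -> R :=
  match b with Part t0 => fun=> sFt i t0 | _ => fun=> Num.max (sF i) (sP i) end.

Lemma type_law_ge0 i b t : 0 <= type_law i b t.
Proof. by case: b => [|t0|] //=; case: (t == t0). Qed.

Lemma type_law_sum1 i b : \sum_t type_law i b t = 1.
Proof.
case: b => [|t0|] //=; rewrite (bigD1 t0) //= eqxx big1 ?addr0 // => t /negbTE ->.
by [].
Qed.

Definition capped_bound s i y : R :=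
  capped_value i (type_law i (s i)) (cap i (s i)) (Val (upd s i Done)) y.

Section CappedBoundStep.
Variable s : state N Gam.
Hypothesis IH : forall s' i z, (weight s' < weight s)%N -> s' i <> Done ->
  Val s' z <= capped_bound s' i z.

Lemma inspection_self_le_capped i y :
  s i <> Done -> inspection_value s y i <= capped_bound s i y.
Proof.
have hf := Value_nondecr_lip1 (upd s i Done).
rewrite /inspection /capped_bound; move: (weight_upd_Part s i).
case: (s i) => [|t|] // ltP _ /=; last exact: Fopen_Part_le_capped.
have [le_sF le_sP] : sF i <= Num.max (sF i) (sP i) /\ sP i <= Num.max (sF i) (sP i).
  by rewrite !le_max !lexx orbT.
rewrite ge_max Fopen_le_capped //=; apply: le_trans (Popen_le_capped i _ y _ hf le_sP).
rewrite lerD2l; apply: ler_sum => t _; apply: ler_wpM2l => //.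
have := IH (upd s i (Part t)) i y (ltP t erefl).
by rewrite /capped_bound upd_eq upd_upd /= capped_value_indicator; apply.
Qed.

Lemma Value_upd_le_capped i j x z : j != i -> s i <> Done ->
  (weight (upd s j x) < weight s)%N ->
  Val (upd s j x) z <=
  capped_value i (type_law i (s i)) (cap i (s i)) (Val (upd (upd s i Done) j x)) z.
Proof.
move=> ji si lt; have := IH (upd s j x) i z lt.
by rewrite /capped_bound upd_neq // (upd_comm _ _ _ _ _ ji); apply.
Qed.

Lemma Fopen_other_le_capped i j t y : j != i -> s i <> Done -> s j <> Done ->
  condE mu j t (fun v => Val (upd s j Done) (Num.max y v)) <=
  capped_value i (type_law i (s i)) (cap i (s i))
    (fun z => condE mu j t (fun v => Val (upd (upd s i Done) j Done) (Num.max z v))) y.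
Proof.
move=> ji si sj; have [w0 w1] := (type_law_ge0 i (s i), type_law_sum1 i (s i)).
have hf := Value_nondecr_lip1 (upd (upd s i Done) j Done).
rewrite -capped_value_swap //; apply: le_Rintegral => //.
- apply: integrable_nondecr_lip1 => //.
  exact: nondecr_lip1_comp (Value_nondecr_lip1 _) (nondecr_lip1_maxl y).
- apply: integrable_nondecr_lip1 => //.
  exact: nondecr_lip1_comp (capped_value_nondecr_lip1 w0 w1 _ hf) (nondecr_lip1_maxl y).
- by move=> v _; apply: Value_upd_le_capped => //; exact: weight_upd_Done.
Qed.

Lemma inspection_other_le_capped i j y : j != i -> s i <> Done ->
  inspection_value s y j <= capped_bound s i y.
Proof.
move=> ji si; have [w0 w1] := (type_law_ge0 i (s i), type_law_sum1 i (s i)).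
set s' := upd s i Done; have s'j : s' j = s j by rewrite /s' upd_neq 1?eq_sym.
have lipF t := nondecr_lip1_Rintegral_max (mu_mean j t) _ _
  (Value_nondecr_lip1 (upd s' j Done)) nondecr_lip1_id.
have lipP t : nondecr_lip1 (Val (upd s' j (Part t))) := Value_nondecr_lip1 _.
have le_Val z : inspection_value s' z j <= Val s' z by exact: inspection_le_Value.
rewrite /inspection s'j in le_Val; rewrite /capped_bound -/s' /inspection.
move: le_Val (weight_upd_Part s j) (Fopen_other_le_capped i j); rewrite -/s'.
case sj: (s j) => [|t0|] // le_Val ltP Fopen_le.
- rewrite ge_max; apply/andP; split.
  + apply: (@le_trans _ _ (- cF j + \sum_t pT j t * capped_value i (type_law i (s i))
      (cap i (s i)) (fun z => condE mu j t (fun v => Val (upd s' j Done) (Num.max z v)))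
      y)).
      rewrite lerD2l; apply: ler_sum => t _; apply: ler_wpM2l => //.
      by apply: Fopen_le; rewrite ?sj.
    rewrite -capped_value_affine //; apply: le_capped_value => //.
    * exact/nondecr_lip1_addl/nondecr_lip1_convex.
    * exact: Value_nondecr_lip1.
    * by move=> z; apply: le_trans (le_Val z); rewrite le_max lexx.
  + apply: (@le_trans _ _ (- cP j + \sum_t pT j t * capped_value i (type_law i (s i))
      (cap i (s i)) (Val (upd s' j (Part t))) y)).
      rewrite lerD2l; apply: ler_sum => t _; apply: ler_wpM2l => //.
      by apply: Value_upd_le_capped; rewrite ?ltP.
    rewrite -capped_value_affine //; apply: le_capped_value => //.
    * exact/nondecr_lip1_addl/nondecr_lip1_convex.
    * exact: Value_nondecr_lip1.
    * by move=> z; apply: le_trans (le_Val z); rewrite le_max lexx orbT.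
- apply: (@le_trans _ _ (- cF j + capped_value i (type_law i (s i)) (cap i (s i))
    (fun z => condE mu j t0 (fun v => Val (upd s' j Done) (Num.max z v))) y)).
    by rewrite lerD2l; apply: Fopen_le; rewrite ?sj.
  rewrite -capped_value_addl //; last exact: lipF.
  apply: le_capped_value => //.
  + exact/nondecr_lip1_addl/lipF.
  + exact: Value_nondecr_lip1.
- exact: capped_value_ge w0 w1 _ _ (Value_nondecr_lip1 _) (Value_ge _).
Qed.

End CappedBoundStep.

Lemma Value_le_capped_bound s i y : s i <> Done -> Val s y <= capped_bound s i y.
Proof.
have [n] := ubnP (weight s); elim: n s i y => // n IH s i y ws si.
have IH' s' k z : (weight s' < weight s)%N -> s' k <> Done ->
    Val s' z <= capped_bound s' k z.
  by move=> lt; apply: IH; lia.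
rewrite ValueE; apply: bigmax_le => [|j _].
  exact: capped_value_ge (type_law_ge0 _ _) (type_law_sum1 _ _) _ _
    (Value_nondecr_lip1 _) (Value_ge _).
have [->|ji] := eqVneq j i; first exact: inspection_self_le_capped.
exact: inspection_other_le_capped.
Qed.

Lemma Value_above_caps s z :
  (forall j, s j = Closed -> Num.max (sF j) (sP j) <= z) ->
  (forall j t, s j = Part t -> sFt j t <= z) -> Val s z = z.
Proof.
have [n] := ubnP (weight s); elim: n s => // n IH s ws capC capP.
pose is_open j := if s j is Done then false else true.
have [j j_open|all_Done] := pickP is_open; last first.
  rewrite ValueE inspection_Done // => k.
  by move: (all_Done k); rewrite /is_open; case: (s k).
have sj : s j <> Done by move: j_open; rewrite /is_open; case: (s j).
have cap_le t : cap j (s j) t <= z.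
  by move: sj (capC j) (capP j); case: (s j) => //= [_ /(_ erefl) | t0 _ _ /(_ t0 erefl)].
apply/eqP; rewrite eq_le Value_ge andbT; apply: le_trans (Value_le_capped_bound _ _ z sj) _.
rewrite /capped_bound capped_value_const ?type_law_sum1 //.
rewrite IH // => [|k|k t]; first by have := weight_upd_Done _ _ sj; lia.
- by have [<-|jk] := eqVneq j k; rewrite ?upd_eq // upd_neq //; exact: capC.
- have [ejk|jk] := eqVneq j k; first by subst k; rewrite upd_eq.
  by rewrite upd_neq //; exact: capP.
Qed.

Lemma QFopen_eq_capped_bound s i y : s i = Closed -> sP i < sF i -> y < sF i ->
  (forall z, sF i <= z -> Val (upd s i Done) z = z) ->
  QFopen pT mu cF cP s y i = capped_bound s i y.
Proof.
move=> si lt_sP y_lt cont_id; have hf := Value_nondecr_lip1 (upd s i Done).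
have capE : Num.max (sF i) (sP i) = sF i by apply/max_idPl/ltW.
rewrite /QFopen /capped_bound si /= capE -(hsF i) -sumrN -big_split /=.
apply: eq_bigr => t _; rewrite -mulrN -mulrDr; congr (_ * _).
apply/eqP; rewrite addrC subr_eq; apply/eqP; rewrite /condE -RintegralD //; last 2 first.
- by apply: integrable_nondecr_lip1 => //; exact: nondecr_lip1_capped.
- by apply: integrable_nondecr_lip1 => //; exact: nondecr_lip1_excess.
apply: eq_Rintegral => v _; have [le_v|lt_v] := leP v (sF i); first by case_minmax; lra.
rewrite (max_r (ltW (lt_trans y_lt lt_v))) (max_r (ltW y_lt)) !cont_id ?(ltW lt_v) //.
by case_minmax; lra.
Qed.

End Thresholds.

End Pandora.

Theorem mainTheorem3 (R : realType) (N : nat) (Gam : 'I_N -> finType)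
  (pT : forall j, Gam j -> R) (mu : forall j, Gam j -> probability R R)
  (cF cP : 'I_N -> R)
  (* type distributions *)
  (hpT0 : forall j t, 0 <= pT j t)
  (hpT1 : forall j, \sum_(t : Gam j) pT j t = 1)
  (* prizes are nonnegative with finite mean *)
  (hmu0 : forall j t, mu j t [set v | v < 0] = 0%E)
  (hmuI : forall j t, (mu j t).-integrable setT (fun v => v%:E))
  (* positive inspection costs *)
  (hcF : forall j, 0 < cF j) (hcP : forall j, 0 < cP j)
  (* thresholds *)
  (sF sP : 'I_N -> R) (sFt : forall j, Gam j -> R)
  (hsF : forall j, is_sigmaF pT mu cF j (sF j))
  (hsP : forall j, is_sigmaP pT mu cF cP j (sP j))
  (hsFt : forall j t, is_sigmaFt mu cF j t (sFt j t))
  (* the state and the box *)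
  (s : state N Gam) (y : R) (i : 'I_N)
  (hstop : y < Value pT mu cF cP s y)
  (hi : s i = Closed)
  (hFP : sP i < sF i)
  (hmaxC : forall j, s j = Closed -> Num.max (sF j) (sP j) <= sF i)
  (hmaxP : forall j t, s j = Part t -> sFt j t <= sF i) :
  Value pT mu cF cP s y = QFopen pT mu cF cP s y i.
Proof.
have si : s i <> Done by rewrite hi.
have Value_le := Value_le_capped_bound hpT0 hpT1 hmuI hsF hsP hsFt s i y si.
have cont_id z : sF i <= z -> Value pT mu cF cP (upd s i Done) z = z.
  move=> le_z; apply: (Value_above_caps hpT0 hpT1 hmuI hsF hsP hsFt) => [j|j t].
  - have [<-|ij] := eqVneq i j; first by rewrite upd_eq.
    by rewrite upd_neq // => /hmaxC /le_trans; apply.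
  - have [eij|ij] := eqVneq i j; first by subst j; rewrite upd_eq.
    by rewrite upd_neq // => /hmaxP /le_trans; apply.
have y_lt : y < sF i.
  rewrite ltNge; apply/negP => le_y.
  have caps_le (t : Gam i) : Num.max (sF i) (sP i) <= y.
    by rewrite ge_max le_y (le_trans (ltW hFP)).
  move: Value_le; rewrite /capped_bound hi /= (capped_value_const (hpT1 i)) // cont_id //.
  by rewrite leNgt hstop.
rewrite -(QFopen_eq_capped_bound hpT0 hpT1 hmuI hsF s i y hi hFP y_lt cont_id) in Value_le.
apply/eqP; rewrite eq_le Value_le /=.
by apply: le_trans (inspection_le_Value s y i); rewrite /inspection hi le_max lexx.
Qed.
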